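(* Let $n,k,t$ be positive integers with $k>t>0$ and $n>2k-t$. Then $$\operatorname{tw}(K(n,k,t))\le \binom{n}{k}-\binom{n-t}{k-t}-1.$$
   Context: For integers $k>t\ge 1$ and $n>2k-t$, the generalized Kneser graph $K(n,k,t)$ is the graph whose vertices are the $k$-element subsets of $[n]=\{1,\dots,n\}$, two vertices $K,K'$ being adjacent if and only if $|K\cap K'|<t$. A tree decomposition of a graph $\Gamma$ is a pair $(T,(B_x)_{x\in V(T)})$ where $T$ is a tree and each $B_x\subseteq V(\Gamma)$, such that every edge of $\Gamma$ is contained in some $B_x$, and for each vertex $v$ of $\Gamma$ the set $\{x\in V(T): v\in B_x\}$ is non-empty and induces a connected subgraph of $T$. Its width is $\max_x |B_x|-1$, and the treewidth $\operatorname{tw}(\Gamma)$ is the minimum width of a tree decomposition of $\Gamma$. *)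

From mathcomp Require Import all_boot all_order.
Set Implicit Arguments. Unset Strict Implicit. Unset Printing Implicit Defensive.

Record sgraph (V : finType) := SGraph {
  adj : rel V;
  adj_sym : symmetric adj;
  adj_irr : irreflexive adj }.

Definition is_tree (N : nat) (e : rel 'I_N) : Prop :=
  [/\ 0 < N, symmetric e, irreflexive e,
      (forall x y, connect e x y) &
      #|[set p : 'I_N * 'I_N | e p.1 p.2 && (p.1 < p.2)%N]| = N.-1].

Definition induces_connected (N : nat) (e : rel 'I_N) (S : {set 'I_N}) : Prop :=
  forall x y, x \in S -> y \in S ->
    connect (fun a b => [&& e a b, a \in S & b \in S]) x y.

Definition tree_decomposition (V : finType) (G : sgraph V)
  (N : nat) (e : rel 'I_N) (B : 'I_N -> {set V}) : Prop :=
  [/\ is_tree e,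
      (forall u v, adj G u v -> exists x, (u \in B x) && (v \in B x)) &
      (forall v, (exists x, v \in B x) /\
                 induces_connected e [set x | v \in B x])].


Definition td_width (V : finType) (N : nat) (B : 'I_N -> {set V}) : nat :=
  (\max_(x : 'I_N) #|B x|).-1.

Definition has_td_of_width (V : finType) (G : sgraph V) (w : nat) : Prop :=
  exists N (e : rel 'I_N) (B : 'I_N -> {set V}),
    tree_decomposition G e B /\ td_width B = w.

(* tw(G) <= m, where tw(G) is the minimum width of a tree decomposition:
   since the minimum is attained, tw(G) <= m iff some tree decomposition
   has width <= m. *)
Definition treewidth_le (V : finType) (G : sgraph V) (m : nat) : Prop :=
  exists w, w <= m /\ has_td_of_width G w.

Definition kvert (n k : nat) := {A : {set 'I_n} | #|A| == k}.

Definition kneser_rel (n k t : nat) : rel (kvert n k) :=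
  fun A B => (A != B) && (#|val A :&: val B| < t).

Lemma kneser_sym (n k t : nat) : symmetric (@kneser_rel n k t).
Proof. by move=> A B; rewrite /kneser_rel eq_sym setIC. Qed.

Lemma kneser_irr (n k t : nat) : irreflexive (@kneser_rel n k t).
Proof. by move=> A; rewrite /kneser_rel eqxx. Qed.

Definition Kneser (n k t : nat) : sgraph (kvert n k) :=
  SGraph (@kneser_sym n k t) (@kneser_irr n k t).

From mathcomp Require Import all_boot all_order.
From mathcomp Require Import zify.

(* The k-sets containing {0, ..., t-1} form an independent set I of K(n,k,t)
   of size C(n-t, k-t).  Take a star decomposition: the centre bag is the
   complement of I, and each v in I gets a leaf bag made of v and its
   neighbours, all of which lie outside I.  Exchanging an element of
   {0, ..., t-1} in v for one outside v gives a non-neighbour of v outside I,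
   so every leaf bag has at most |V \ I| elements and the width is
   |V \ I| - 1. *)

Set Implicit Arguments.
Unset Strict Implicit.
Unset Printing Implicit Defensive.

Definition star_rel (N : nat) : rel 'I_N.+1 :=
  fun x y => (x != y) && ((x == ord0) || (y == ord0)).
Arguments star_rel : clear implicits.

Lemma star_rel_sym (N : nat) : symmetric (star_rel N).
Proof. by move=> x y; rewrite /star_rel eq_sym orbC. Qed.

Lemma star_induces_connected (N : nat) (S : {set 'I_N.+1}) :
  ord0 \in S -> induces_connected (star_rel N) S.
Proof.
move=> S0 x y xS yS; set e := (fun a b => _).
have to0 z : z \in S -> connect e z ord0.
  case: (eqVneq z ord0) => [-> _|z0 zS]; first exact: connect0.
  by apply: connect1; rewrite /e /star_rel z0 eqxx orbT zS S0.
have from0 z : z \in S -> connect e ord0 z.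
  case: (eqVneq z ord0) => [-> _|z0 zS]; first exact: connect0.
  by apply: connect1; rewrite /e /star_rel eq_sym z0 eqxx zS S0.
exact: connect_trans (to0 x xS) (from0 y yS).
Qed.

Lemma star_tree (N : nat) : is_tree (star_rel N).
Proof.
split=> //; first exact: star_rel_sym.
- by move=> x; rewrite /star_rel eqxx.
- move=> x y; have := star_induces_connected (in_setT ord0) (in_setT x) (in_setT y).
  by apply: connect_sub => a b /and3P[ab _ _]; apply: connect1.
have -> : [set p : 'I_N.+1 * 'I_N.+1 | star_rel N p.1 p.2 && (p.1 < p.2)%N]
        = setX [set ord0] [set~ ord0].
  apply/setP => -[[[|x] hx] [[|y] hy]]; rewrite !inE /star_rel /=;
  by rewrite -?val_eqE /= ?andbT ?andbF.
by rewrite cardsX cards1 cardsC1 card_ord mul1n.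
Qed.

Lemma treewidth_le_mono (V : finType) (G : sgraph V) (m m' : nat) :
  m <= m' -> treewidth_le G m -> treewidth_le G m'.
Proof. by move=> mm' [w [wm Gw]]; exists w; split=> //; exact: leq_trans mm'. Qed.

Section StarDecomposition.

Variables (V : finType) (G : sgraph V) (I : {set V}).
Hypothesis I_indep : {in I &, forall u v, ~~ adj G u v}.

Definition star_bag (x : 'I_#|V|.+1) : {set V} :=
  match unlift ord0 x with
  | None => ~: I
  | Some i => let v := enum_val i in
              if v \in I then v |: [set u | adj G v u] else set0
  end.

Definition star_leaf (v : V) : 'I_#|V|.+1 := lift ord0 (enum_rank v).

Lemma star_bag0 : star_bag ord0 = ~: I.
Proof. by rewrite /star_bag unlift_none. Qed.

Lemma star_bag_leaf (v : V) :
  v \in I -> star_bag (star_leaf v) = v |: [set u | adj G v u].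
Proof. by move=> vI; rewrite /star_bag /star_leaf liftK enum_rankK vI. Qed.

Lemma star_bag_indep (w : V) (x : 'I_#|V|.+1) :
  w \in I -> w \in star_bag x -> x = star_leaf w.
Proof.
move=> wI; rewrite /star_bag; case: (unliftP ord0 x) => [j ->|->]; last first.
  by rewrite inE wI.
case vI: (enum_val j \in I); last by rewrite inE.
rewrite in_setU1 inE => /orP[/eqP->|vw]; first by rewrite /star_leaf enum_valK.
by move: (I_indep vI wI); rewrite vw.
Qed.

Lemma star_tree_decomposition :
  tree_decomposition G (star_rel #|V|) star_bag.
Proof.
split; first exact: star_tree.
- move=> u v uv; case uI: (u \in I).
    by exists (star_leaf u); rewrite star_bag_leaf // !in_setU1 !inE eqxx uv orbT.
  case vI: (v \in I).
    exists (star_leaf v); rewrite star_bag_leaf // !in_setU1 !inE eqxx.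
    by rewrite (adj_sym G) uv orbT.
  by exists ord0; rewrite star_bag0 !in_setC uI vI.
- move=> w; case wI: (w \in I); split.
  + by exists (star_leaf w); rewrite star_bag_leaf // in_setU1 eqxx.
  + move=> x y; rewrite !inE => /(star_bag_indep wI) -> /(star_bag_indep wI) ->.
    exact: connect0.
  + by exists ord0; rewrite star_bag0 in_setC wI.
  + by apply: star_induces_connected; rewrite inE star_bag0 in_setC wI.
Qed.

Hypothesis I_nonneighbour : {in I, forall v, exists2 u, u \notin I & ~~ adj G v u}.

Lemma card_star_bag (x : 'I_#|V|.+1) : #|star_bag x| <= #|~: I|.
Proof.
rewrite /star_bag; case: (unlift ord0 x) => [i|//].
case vI: (enum_val i \in I); last by rewrite cards0.
set v := enum_val i; have [u uI vu] := I_nonneighbour vI.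
have N_sub : [set u | adj G v u] \proper ~: I.
  apply/properP; split; last by exists u; rewrite ?in_setC ?inE ?(negbTE vu).
  apply/subsetP => w; rewrite inE in_setC => vw; apply/negP => wI.
  by move: (I_indep vI wI); rewrite vw.
by rewrite cardsU1 (leq_trans _ (proper_card N_sub)) // -add1n leq_add2r leq_b1.
Qed.

Lemma treewidth_le_star : treewidth_le G #|~: I|.-1.
Proof.
exists (td_width star_bag); split; last first.
  by exists #|V|.+1, (star_rel #|V|), star_bag; split=> //; exact: star_tree_decomposition.
rewrite /td_width -!subn1 leq_sub2r //.
by apply/bigmax_leqP => x _; exact: card_star_bag.
Qed.

End StarDecomposition.

Lemma card_supersets (T : finType) (S : {set T}) (k : nat) : #|S| <= k ->
  #|[set A : {set T} | S \subset A & #|A| == k]| = 'C(#|T| - #|S|, k - #|S|).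
Proof.
move=> Sk; rewrite -(cardsC S) addKn -cards_draws.
set D := [set C : {set T} | C \subset ~: S & #|C| == k - #|S|].
have card_setU C : C \in D -> #|S :|: C| = #|S| + #|C|.
  rewrite inE -disjoints_subset disjoint_sym => /andP[SC _].
  by apply/eqP; rewrite (leq_card_setU S C).2.
have -> : [set A : {set T} | S \subset A & #|A| == k] = [set S :|: C | C in D].
  apply/setP => A; rewrite inE; apply/andP/imsetP => [[SA /eqP cA]|[C CD ->]].
    have AS : A :\: S \in D.
      by rewrite inE {1}setDE subsetIr cardsD (setIidPr SA) cA eqxx.
    by exists (A :\: S) => //; rewrite -{1}(setID A S) (setIidPr SA).
  by rewrite subsetUl card_setU //; move: CD; rewrite inE => /andP[_ /eqP->]; lia.
apply: card_in_imset => C1 C2; rewrite !inE -!disjoints_subset.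
move=> /andP[/setDidPl C1S _] /andP[/setDidPl C2S _] /(congr1 (fun A => A :\: S)).
by rewrite !setDUl setDv !set0U C1S C2S.
Qed.

Lemma card_set_ord_lt (n t : nat) : t <= n -> #|[set i : 'I_n | i < t]| = t.
Proof.
move=> tn; have -> : [set i : 'I_n | i < t] = widen_ord tn @: 'I_t.
  apply/setP=> i; rewrite inE; apply/idP/imsetP => [it|[j _ ->]]; last first.
    by rewrite /= ltn_ord.
  by exists (Ordinal it) => //; apply: val_inj.
by rewrite card_imset ?card_ord // => a b /(congr1 val) /= /val_inj.
Qed.

Lemma card_kvert (n k : nat) : #|{: kvert n k}| = 'C(n, k).
Proof.
rewrite card_sig; have := card_draws 'I_n k; rewrite card_ord => <-.
by apply: eq_card => A; rewrite !inE.
Qed.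

Section KneserStar.

Variables n k t : nat.

Let T0 := [set i : 'I_n | i < t].

Definition kstar : {set kvert n k} := [set A : kvert n k | T0 \subset val A].

Lemma kstar_indep :
  t <= n -> {in kstar &, forall u v, ~~ adj (Kneser n k t) u v}.
Proof.
move=> tn u v; rewrite !inE => T0u T0v.
rewrite /= /kneser_rel negb_and -leqNgt -{1}(card_set_ord_lt tn).
by rewrite subset_leq_card ?orbT // subsetI T0u T0v.
Qed.

Lemma card_kstar : t <= k -> t <= n -> #|kstar| = 'C(n - t, k - t).
Proof.
move=> tk tn; rewrite -(card_imset _ val_inj).
have -> : val @: kstar = [set A : {set 'I_n} | T0 \subset A & #|A| == k].
  apply/setP => A; rewrite inE; apply/imsetP/andP => [[B]|[T0A cA]].
    by rewrite inE => T0B ->; rewrite T0B (valP B).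
  by exists (exist _ A cA); rewrite ?inE.
by rewrite card_supersets card_set_ord_lt ?card_ord.
Qed.

Lemma kstar_nonneighbour : 0 < t -> t < k -> k < n ->
  {in kstar, forall v, exists2 u, u \notin kstar & ~~ adj (Kneser n k t) v u}.
Proof.
move=> t0 tk kn v; rewrite inE => T0v.
have n0 : 0 < n by lia.
pose i0 : 'I_n := Ordinal n0.
have i0v : i0 \in val v by apply: (subsetP T0v); rewrite inE.
have /subsetPn [x _ xv] : ~~ ([set: 'I_n] \subset val v).
  apply/negP => /subset_leq_card; rewrite cardsT card_ord (eqP (valP v)); lia.
have card_vD : #|val v :\ i0| = k.-1.
  by have cv := cardsD1 i0 (val v); rewrite i0v (eqP (valP v)) in cv; rewrite [in RHS]cv.
pose W := x |: (val v :\ i0).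
have cW : #|W| == k.
  by rewrite cardsU1 in_setD1 (negbTE xv) andbF card_vD; apply/eqP; lia.
exists (exist _ W cW).
  rewrite inE; apply/subsetPn; exists i0; first by rewrite inE.
  by rewrite in_setU1 setD11 orbF; apply: contra xv => /eqP <-.
have vD_sub : val v :\ i0 \subset val v :&: W by rewrite subsetI subD1set subsetU1.
rewrite /= /kneser_rel negb_and -leqNgt (leq_trans _ (subset_leq_card vD_sub)) ?orbT //.
by rewrite card_vD; lia.
Qed.

End KneserStar.

Theorem mainTheorem1 (n k t : nat) :
  0 < t -> t < k -> 2 * k - t < n ->
  treewidth_le (Kneser n k t) ('C(n, k) - 'C(n - t, k - t) - 1).
Proof.
move=> t0 tk n_gt.
have tn : t <= n by lia.
have kn : k < n by lia.
have := treewidth_le_star (kstar_indep (k:=k) tn) (kstar_nonneighbour t0 tk kn).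
apply: treewidth_le_mono.
by have := cardsC (kstar n k t); rewrite card_kvert card_kstar //; lia.
Qed.
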